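(* For every simple graph $\Gamma$ on $[n]$ and every $m\in\mathbb{N}$, the weighted integer points enumerator of the $m$-graph polytope equals the image of the $1$-uniform decorated graph under the universal morphism: $F_q(Q_{\Gamma,m})=\Psi^m_q(\Gamma^{\mathbf 1})$.
   Context: Let $\Gamma=([n],E)$ be a simple graph and $m\in\mathbb{N}$. For $S\subseteq[n]$ let $\Delta_S=\mathrm{conv}\{e_s: s\in S\}$. Let $\mathsf{H}_m(\Gamma)=\{S\subseteq[n]: |S|\le m+1,\ \Gamma|_S \text{ connected}\}$ and define the $m$-graph polytope $Q_{\Gamma,m}=\sum_{S\in\mathsf{H}_m(\Gamma)}\Delta_S$. Faces of the permutohedron $Pe^{n-1}$ are identified with flags $\mathcal{F}:\emptyset=F_0\subset F_1\subset\cdots\subset F_k=[n]$; $M_\mathcal{F}$ denotes the monomial quasisymmetric function $M_{\alpha}$ with $\alpha=(|F_1|-|F_0|,\ldots,|F_k|-|F_{k-1}|)$, and $L(Pe^{n-1})$ the set of all such flags. For a hypergraph $\mathsf{H}$ on $[n]$, restriction is $\mathsf{H}|_F=\{H\in\mathsf{H}: H\subseteq F\}$, contraction is $\mathsf{H}/F=\{H\setminus F: H\in\mathsf{H}\}$, $\mathsf{H}/\mathcal{F}=\bigsqcup_{i=1}^k(\mathsf{H}|_{F_i})/F_{i-1}$, and $\mathsf{rk}(\mathsf{H}/\mathcal{F})=n-c(\mathsf{H}/\mathcal{F})$ with $c$ the number of connected components. The weighted integer points enumerator is $F_q(Q_{\mathsf{H}})=\sum_{\mathcal{F}\in L(Pe^{n-1})}q^{\mathsf{rk}(\mathsf{H}/\mathcal{F})}M_\mathcal{F}$,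 and $F_q(Q_{\Gamma,m})=F_q(Q_{\mathsf{H}_m(\Gamma)})$. A decorated graph $\Gamma^w=([n],E,w)$ has edge decoration $w:E\to\mathbb{N}$; $\Gamma^{\mathbf 1}$ is the decorated graph with $w\equiv 1$. The ripping $\Gamma^w|_S$ is the induced decorated subgraph on $S$; the sewing $\Gamma^w/S$ is the induced subgraph on $[n]\setminus S$ together with additional edges $uv$ for all $u,v\in[n]\setminus S$ joined by an edge path whose interior vertices lie in $S$, decorated by the minimal sum of decorations over such paths. $\mathrm{pr}_m$ deletes all edges with decoration greater than $m$. The graded Hopf algebra $\mathcal{G}^{W,m}$ on isomorphism classes of decorated graphs has product disjoint union and coproduct $\Delta_m(\Gamma^w)=\sum_{S\subseteq[n]}\mathrm{pr}_m(\Gamma^w|_S)\otimes\mathrm{pr}_m(\Gamma^w/S)$; with character $\zeta_q(\Gamma^w)=q^{n-c(\Gamma^w)}$ it is a combinatorial Hopf algebra, and $\Psi^m_q:(\mathcal{G}^{W,m},\zeta_q)\to(\mathcal{Q}Sym,\zeta)$ is the unique morphism of combinatorial Hopf algebras (Aguiar–Bergeron–Sottile). Explicitly, $\Psi^m_q(\Gamma^w)=\sum_{\mathcal{F}\in L(Pe^{n-1})}q^{\mathsf{rk}_m(\Gamma^w/\mathcal{F})}M_\mathcal{F}$, where $\mathsf{rk}_m(\Gamma^w/\mathcal{F})=n-\sum_{i=1}^k c(\mathrm{pr}_m(\Gamma^w|_{F_i}/F_{i-1}))$. *)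

From HB Require Import structures.
From mathcomp Require Import all_boot all_order all_algebra.
From mathcomp Require Import boolp.
Set Implicit Arguments. Unset Strict Implicit. Unset Printing Implicit Defensive.
Import GRing.Theory.
Local Open Scope ring_scope.

(* ---------- Flags of [n] (faces of the permutohedron) ----------
   A flag  0 = F_0 < F_1 < ... < F_k = [n]  is encoded by the map
   f : [n] -> {0..n-1} sending v to the (0-based) index i of the block
   F_{i+1} \ F_i containing v; the image of f must be an initial segment
   {0,...,k-1}.  This is a bijection between flags and such maps. *)
Definition is_flag n (f : {ffun 'I_n -> 'I_n}) : bool :=
  [forall v, forall j : 'I_n, (j < f v)%N ==> [exists u, f u == j]].

Definition nblocks n (f : {ffun 'I_n -> 'I_n}) : nat := #|[set f v | v : 'I_n]|.

Definition flagset n (f : {ffun 'I_n -> 'I_n}) (i : nat) : {set 'I_n} :=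
  [set v | (f v < i)%N].

Definition flag_comp n (f : {ffun 'I_n -> 'I_n}) : seq nat :=
  [seq #|[set v | val (f v) == i]| | i <- iota 0 (nblocks f)].

Definition hadj n (H : {set {set 'I_n}}) : rel 'I_n :=
  fun u v => [exists h in H, (u \in h) && (v \in h)].

Definition hyp_ncomp n (H : {set {set 'I_n}}) : nat :=
  #|[set [set v | connect (hadj H) u v] | u : 'I_n]|.

(* H / F = disjoint union over i of (H|_{F_{i+1}}) / F_i  (0-based blocks) *)
Definition hcontr_flag n (H : {set {set 'I_n}}) (f : {ffun 'I_n -> 'I_n})
  : {set {set 'I_n}} :=
  [set h :\: flagset f (val i) | h : {set 'I_n} in H, i : 'I_n in [set: 'I_n]
     & ((val i < nblocks f)%N && (h \subset flagset f (val i).+1))].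

Definition hrk n (H : {set {set 'I_n}}) (f : {ffun 'I_n -> 'I_n}) : nat :=
  (n - hyp_ncomp (hcontr_flag H f))%N.

(* Quasisymmetric functions are represented by their coefficient vectors in
   the monomial basis M_alpha: a map  alpha |-> coefficient in Z[q]. *)
Definition QSymq := seq nat -> {poly int}.

Definition Fq_hyp n (H : {set {set 'I_n}}) : QSymq :=
  fun alpha => \sum_(f : {ffun 'I_n -> 'I_n} | is_flag f && (flag_comp f == alpha))
                  'X^(hrk H f).

(* simple graph on [n]: symmetric irreflexive e : rel 'I_n *)
Definition restr_rel n (e : rel 'I_n) (S : {set 'I_n}) : rel 'I_n :=
  fun u v => [&& u \in S, v \in S & e u v].

Definition connectedb n (e : rel 'I_n) (S : {set 'I_n}) : bool :=
  (S != set0) && [forall u in S, forall v in S, connect (restr_rel e S) u v].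

Definition Hm n (e : rel 'I_n) (m : nat) : {set {set 'I_n}} :=
  [set S : {set 'I_n} | (#|S| <= m.+1)%N && connectedb e S].

Definition Fq_graph n (e : rel 'I_n) (m : nat) : QSymq := Fq_hyp (Hm e m).

(* ---------- Decorated graphs: (e, w) with w the edge decoration ---------- *)
(* Edge uv of pr_m(Gamma^w|_F / G) (G subset of F): u, v in F \ G distinct,
   joined in Gamma|_F by an edge path whose interior vertices lie in G, and
   whose decoration (minimal sum over such paths) is <= m, i.e. some such
   path has decoration sum <= m. *)
Definition sewn_edge n (e : rel 'I_n) (w : 'I_n -> 'I_n -> nat) (m : nat)
  (F G : {set 'I_n}) (u v : 'I_n) : Prop :=
  [/\ u \in F :\: G, v \in F :\: G, u != v &
   exists p : seq 'I_n,
     [/\ (p != [::]) && path e u p, last u p = v,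
         all (fun x => x \in F) (u :: p),
         all (fun x => x \in G) (take (size p).-1 p) &
         (\sum_(xy <- zip (u :: p) p) w xy.1 xy.2 <= m)%N]].

(* number of connected components of a graph with edge relation r on the
   vertex set A (r relates only vertices of A) *)
Definition ncomp_on n (A : {set 'I_n}) (r : rel 'I_n) : nat :=
  #|[set [set v | connect r u v] | u in A]|.

Definition rk_m n (e : rel 'I_n) (w : 'I_n -> 'I_n -> nat) (m : nat)
  (f : {ffun 'I_n -> 'I_n}) : nat :=
  (n - \sum_(i < n | (i < nblocks f)%N)
         ncomp_on (flagset f i.+1 :\: flagset f i)
           (fun u v => `[< sewn_edge e w m (flagset f i.+1) (flagset f i) u v >]))%N.

Definition Psi n (e : rel 'I_n) (w : 'I_n -> 'I_n -> nat) (m : nat) : QSymq :=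
  fun alpha => \sum_(f : {ffun 'I_n -> 'I_n} | is_flag f && (flag_comp f == alpha))
                  'X^(rk_m e w m f).

From mathcomp Require Import all_boot all_order all_algebra.
From mathcomp Require Import boolp.

Set Implicit Arguments.
Unset Strict Implicit.
Unset Printing Implicit Defensive.

(* Both sides are sums over the same flags, so it suffices to compare ranks
   flag by flag.  Connectivity in the contraction H_m(Γ)/F never crosses the
   blocks F_{i+1} \ F_i.  Inside a block, a hyperedge S \ F_i with S ⊆ F_{i+1}
   connected and |S| <= m+1 links its vertices by paths in S with at most m
   edges; cutting such a path at its vertices outside F_i splits it into sewn
   edges of decoration at most m.  Conversely the vertex set of a path
   realizing a sewn edge of decoration at most m is a connected set of at most
   m+1 vertices.  Hence both sides count the same components. *)

Lemma card_imset_fibers (T I : finType) (K : T -> {set T}) (g : T -> I)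
    (P : pred I) :
  (forall u, u \in K u) -> (forall u v, v \in K u -> g v = g u) ->
  (forall u, P (g u)) ->
  #|[set K u | u : T]| =
    (\sum_(i | P i) #|[set K u | u in [set v | g v == i]]|)%N.
Proof.
move=> Kuu Kg Pg; set S := fun i => [set K u | u in [set v | g v == i]].
have KS u i : (K u \in S i) = (g u == i).
  apply/imsetP/eqP => [[v] | <-]; last by exists u; rewrite ?inE.
  by rewrite inE => /eqP <- Kuv; apply: Kg; rewrite -Kuv.
rewrite -sum1_card.
transitivity (\sum_(C in [set K u | u : T]) \sum_(i | P i) (C \in S i) : nat)%N.
  apply: eq_bigr => _ /imsetP [u _ ->].
  rewrite (bigD1 (g u)) //= KS eqxx big1 // => i /andP [_ ne].
  by rewrite KS eq_sym (negbTE ne).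
rewrite exchange_big; apply: eq_bigr => i _.
rewrite -big_mkcondr sum1_card; apply: eq_card => C.
apply/andP/idP => [[] // | CSi]; split=> //.
by case/imsetP: CSi => u _ ->; apply: imset_f.
Qed.

Section SewnPaths.

Variables (n m : nat) (e : rel 'I_n).

Definition sewn (F G : {set 'I_n}) : rel 'I_n :=
  fun u v => `[< sewn_edge e (fun _ _ => 1%N) m F G u v >].

Lemma sum1_zip_cons (T : Type) (x : T) (p : seq T) :
  (\sum_(xy <- zip (x :: p) p) 1)%N = size p.
Proof. by rewrite sum1_size size_zip /=; apply/minn_idPr/leqnSn. Qed.

Lemma sewn_closed F G : closed (sewn F G) (F :\: G).
Proof. by move=> u v /asboolP [-> -> _ _]. Qed.

Lemma sewn_rcons F G x r y :
  path e x (rcons r y) -> x \in F :\: G -> y \in F :\: G -> x != y ->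
  all (fun z => z \in F) r -> all (fun z => z \in G) r -> (size r < m)%N ->
  sewn F G x y.
Proof.
move=> pxy xFG yFG neq rF rG szr; apply/asboolP; split=> //.
exists (rcons r y); split.
- by rewrite pxy -size_eq0 size_rcons.
- exact: last_rcons.
- by move: xFG yFG; rewrite /= all_rcons rF !inE => /andP [_ ->] /andP [_ ->].
- by rewrite size_rcons -cats1 take_size_cat.
- by rewrite /= sum1_zip_cons size_rcons.
Qed.

Lemma path_sewn_connect F G p x r :
  path e x (r ++ p) -> x \in F :\: G -> all (fun z => z \in G) r ->
  all (fun z => z \in F) (r ++ p) -> last x (r ++ p) \in F :\: G ->
  (size (r ++ p) <= m)%N -> connect (sewn F G) x (last x (r ++ p)).
Proof.
elim: p x r => [|y p IHp] x r.
  rewrite cats0; case/lastP: r => [|r y] _ _; first by move=> *; apply: connect0.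
  by rewrite all_rcons last_rcons inE => /andP [->].
move=> pxry xFG rG rypF lFG szm.
have [yG | yNG] := boolP (y \in G).
  by rewrite -cat_rcons in pxry rypF lFG szm *; apply: IHp; rewrite ?all_rcons ?yG.
move: pxry rypF lFG szm; rewrite cat_path last_cat all_cat size_cat /=.
move=> /and3P [pxr ey pyp] /and3P [rF yF pF] lFG szm.
have yFG : y \in F :\: G by rewrite inE yNG.
have cxy : connect (sewn F G) x y.
  have [<- | neq] := eqVneq x y; first exact: connect0.
  apply: connect1; apply: (@sewn_rcons _ _ _ r) => //.
    by rewrite -cats1 cat_path pxr /= ey.
  by apply: leq_trans szm; rewrite -addn1 leq_add2l.
apply: connect_trans cxy (IHp y [::] _ _ _ _ _ _) => //=; rewrite ?pF //.
by apply: leq_trans szm; rewrite addnS leqW ?leq_addl.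
Qed.

Lemma hyperedge_sewn_connect (F G h : {set 'I_n}) x y :
  h \in Hm e m -> h \subset F -> x \in h :\: G -> y \in h :\: G ->
  connect (sewn F G) x y.
Proof.
rewrite inE => /andP [cardh /andP [_ /forallP hconn]] hF xhG yhG.
have [xh yh] : x \in h /\ y \in h by case/setDP: xhG; case/setDP: yhG.
move: (hconn x); rewrite xh => /forallP /(_ y); rewrite yh => /connectP [p pxp ey].
case: (shortenP pxp) ey => q pxq uq _ ey; rewrite ey in yhG *.
have qh : all (fun z => z \in h) q.
  by elim: (q) (x) pxq => //= z q' IHq x' /andP [/and3P [_ -> _] /IHq].
apply: (@path_sewn_connect F G q x [::]) => //=.
- by apply: sub_path pxq => a b /and3P [].
- by rewrite inE; case/setDP: xhG => _ -> /=; apply: (subsetP hF).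
- by apply/allP => z /(allP qh) /(subsetP hF).
- by rewrite inE; case/setDP: yhG => _ -> /=; apply: (subsetP hF); rewrite -ey.
have : (size (x :: q) <= #|h|)%N.
  rewrite -(card_uniqP uq); apply: subset_leq_card; apply/subsetP => z.
  by rewrite inE => /predU1P [-> | /(allP qh)].
by move/leq_trans/(_ cardh).
Qed.

Hypothesis e_sym : symmetric e.

Lemma sewn_hyperedge (F G : {set 'I_n}) x y :
  sewn F G x y -> exists2 h, h \in Hm e m & [/\ h \subset F, x \in h & y \in h].
Proof.
case/asboolP => _ _ _ [p [/andP [_ pxp] ly xpF _]].
rewrite /= sum1_zip_cons => szp; set h := [set z in x :: p].
have hxp : all (fun z => z \in h) (x :: p) by apply/allP => z zp; rewrite inE.
exists h; last first.
  split; last by rewrite inE -ly mem_last.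
  - by apply/subsetP => z; rewrite inE => /(allP xpF).
  - by rewrite inE mem_head.
have pxh : path (restr_rel e h) x p.
  by apply: (sub_in_path _ hxp pxp) => a b ah bh eab; rewrite /restr_rel ah bh.
have restr_sym : connect_sym (restr_rel e h).
  by apply: sym_connect_sym => a b; rewrite /restr_rel andbCA e_sym.
rewrite inE; apply/and3P; split.
- by rewrite cardsE; apply: leq_trans (card_size _) _.
- by apply/set0Pn; exists x; rewrite inE mem_head.
have xh z : z \in h -> connect (restr_rel e h) x z.
  by rewrite inE => /(path_connect pxh).
apply/forall_inP => a ah; apply/forall_inP => b bh.
by apply: connect_trans (xh b bh); rewrite restr_sym xh.
Qed.

End SewnPaths.

Section FlagBlocks.

Variables (n : nat) (f : {ffun 'I_n -> 'I_n}).

Lemma in_flag_block (i : nat) v :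
  (v \in flagset f i.+1 :\: flagset f i) = (f v == i :> nat).
Proof. by rewrite !inE ltnS -leqNgt andbC -eqn_leq. Qed.

Lemma flag_lt_nblocks v : is_flag f -> (f v < nblocks f)%N.
Proof.
move=> /forallP /(_ v) /forallP flagf.
pose lift_ord (j : 'I_(f v).+1) : 'I_n := widen_ord (ltn_ord (f v)) j.
have sub : [set lift_ord j | j : 'I_(f v).+1] \subset [set f u | u : 'I_n].
  apply/subsetP => _ /imsetP [j _ ->].
  have [jv | jv] := eqVneq (val j) (val (f v)).
    by rewrite (_ : lift_ord j = f v) ?imset_f //; apply: val_inj.
  have jlt : (lift_ord j < f v)%N by rewrite /= ltn_neqAle jv -ltnS ltn_ord.
  have /implyP /(_ jlt) /existsP [u /eqP <-] := flagf (lift_ord j).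
  exact: imset_f.
have lift_inj : injective lift_ord by move=> j k /(congr1 val) /= /val_inj.
rewrite /nblocks -[X in (X <= _)%N](card_ord (f v).+1) -(card_imset _ lift_inj).
exact: subset_leq_card.
Qed.

End FlagBlocks.

Definition block_sewn n m (e : rel 'I_n) (f : {ffun 'I_n -> 'I_n}) (i : nat) :=
  sewn m e (flagset f i.+1) (flagset f i).

Section FlagContraction.

Variables (n m : nat) (e : rel 'I_n) (f : {ffun 'I_n -> 'I_n}).

Local Notation Hc := (hcontr_flag (Hm e m) f).

Lemma hadj_contr_flag x y :
  hadj Hc x y -> f x = f y /\ connect (block_sewn m e f (f x)) x y.
Proof.
case/existsP => hc /andP [/imset2P [h i hH]].
rewrite inE => /and3P [_ _ hF] -> /andP [xhG yhG].
have block z : z \in h :\: flagset f i -> f z = i.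
  case/setDP => /(subsetP hF) zF zG.
  by apply/val_inj/eqP; rewrite -in_flag_block in_setD zF zG.
split; first by rewrite !block.
by rewrite block //; apply: hyperedge_sewn_connect hH hF xhG yhG.
Qed.

Hypotheses (e_sym : symmetric e) (flagf : is_flag f).

Lemma block_sewn_hadj x y : block_sewn m e f (f x) x y -> hadj Hc x y.
Proof.
move=> sxy; have [h hH [hF xh yh]] := sewn_hyperedge e_sym sxy.
move/asboolP: sxy => [/setDP [_ xG] /setDP [_ yG] _ _].
apply/existsP; exists (h :\: flagset f (f x)); rewrite !in_setD xG yG xh yh !andbT.
by apply/imset2P; exists h (f x); rewrite // !inE flag_lt_nblocks.
Qed.

Lemma connect_hadj_contr_flag u v :
  connect (hadj Hc) u v = connect (block_sewn m e f (f u)) u v.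
Proof.
apply/idP/idP.
  case/connectP => p; elim: p u => [u _ -> | y p IHp u /=]; first exact: connect0.
  move=> /andP [/hadj_contr_flag [fuy cuy] pyp] ev.
  by apply: connect_trans cuy _; rewrite fuy; apply: IHp pyp ev.
apply: connect_sub => a b sab; apply/connect1/block_sewn_hadj.
move/asboolP: (sab) => [+ _ _ _]; rewrite in_flag_block => /eqP fa.
by rewrite (val_inj fa).
Qed.

Lemma hyp_ncomp_contr_flag :
  hyp_ncomp Hc = (\sum_(i < n | (i < nblocks f)%N)
    ncomp_on (flagset f i.+1 :\: flagset f i) (block_sewn m e f i))%N.
Proof.
rewrite /hyp_ncomp; have -> : [set [set v | connect (hadj Hc) u v] | u : 'I_n] =
          [set [set v | connect (block_sewn m e f (f u)) u v] | u : 'I_n].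
  apply: eq_imset => u; apply/setP => v.
  by rewrite !inE connect_hadj_contr_flag.
rewrite (card_imset_fibers (g := f) (P := fun i : 'I_n => (i < nblocks f)%N)).
- apply: eq_bigr => i _; rewrite /ncomp_on.
  have -> : flagset f i.+1 :\: flagset f i = [set v | f v == i].
    by apply/setP => v; rewrite in_flag_block inE.
  rewrite (@eq_in_imset _ _ _
    (fun u => [set v | connect (block_sewn m e f i) u v])) //.
  by move=> u; rewrite inE => /eqP ->.
- by move=> u; rewrite inE connect0.
- move=> u v; rewrite inE => /(closed_connect (@sewn_closed n m e _ _)).
  by rewrite !in_flag_block eqxx => /esym /eqP /val_inj.
- by move=> u; apply: flag_lt_nblocks.
Qed.

End FlagContraction.

Lemma hrk_Hm_flag n m (e : rel 'I_n) (f : {ffun 'I_n -> 'I_n}) :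
  symmetric e -> is_flag f -> hrk (Hm e m) f = rk_m e (fun _ _ => 1%N) m f.
Proof. by move=> e_sym flagf; rewrite /hrk hyp_ncomp_contr_flag. Qed.

Theorem mainTheorem2 (n m : nat) (e : rel 'I_n)
  (e_sym : symmetric e) (e_irr : irreflexive e) :
  Fq_graph e m =1 Psi e (fun _ _ => 1%N) m.
Proof.
move=> alpha; apply: eq_bigr => f /andP [flagf _].
by rewrite hrk_Hm_flag.
Qed.
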